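(* Let $G$ be a nilpotent $p$-group ($p$ prime) whose first Ulm factor has bounded period. Then every $p$-nonsingular system of equations over $G$ has a solution in $G$.
   Context: For a nilpotent $p$-group $G$, the height of $g\in G$ is the greatest $n$ with $g=h^{p^n}$ for some $h\in G$; if no greatest such $n$ exists, $g$ has infinite height. The elements of infinite height form a normal subgroup $G_0$, and $G/G_0$ is the first Ulm factor. Bounded period means some $n\ge1$ satisfies $x^n=1$ for all elements $x$. An equation over $G$ in variables $\{x_j\}$ is $w=1$ with $w\in G*F(\{x_j\})$, $F$ free on the $x_j$; systems may be infinite, in infinitely many variables; a solution in $G$ is an assignment $x_j\mapsto g_j\in G$ making all equations hold. The system is $p$-nonsingular if the rows of exponent sums of the variables in the equations are linearly independent over the field of order $p$ (every finite subset of rows is linearly independent). *)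

From Stdlib Require Import ZArith List Znumtheory ClassicalEpsilon.
Import ListNotations.
Open Scope Z_scope.

Record Group := {
  carrier :> Type;
  gmul : carrier -> carrier -> carrier;
  gone : carrier;
  ginv : carrier -> carrier;
  gmulA : forall x y z, gmul x (gmul y z) = gmul (gmul x y) z;
  gmul1 : forall x, gmul gone x = x;
  gmulV : forall x, gmul (ginv x) x = gone
}.

Arguments gmul {g} _ _.
Arguments gone {g}.
Arguments ginv {g} _.

Fixpoint gpow {G : Group} (x : G) (n : nat) : G :=
  match n with O => gone | S k => gmul x (gpow x k) end.

Definition gcomm {G : Group} (a b : G) : G :=
  gmul (gmul (ginv a) (ginv b)) (gmul a b).

(* nilpotent: for some c, all left-normed commutators [x0,x1,...,xc] of
   weight c+1 are trivial (i.e. gamma_{c+1}(G) = 1). *)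
Definition nilpotent (G : Group) : Prop :=
  exists c : nat, forall (x : G) (xs : list G),
    length xs = c -> fold_left gcomm xs x = gone.

Definition p_group (p : nat) (G : Group) : Prop :=
  forall x : G, exists n : nat, gpow x (Nat.pow p n) = gone.

Definition height_ge (p : nat) {G : Group} (g : G) (n : nat) : Prop :=
  exists h : G, gpow h (Nat.pow p n) = g.

Definition infinite_height (p : nat) {G : Group} (g : G) : Prop :=
  ~ exists n, height_ge p g n /\ forall m, height_ge p g m -> (m <= n)%nat.

(* G/G_0 has bounded period: some m >= 1 with x^m in G_0 for all x *)
Definition first_Ulm_factor_bounded (p : nat) (G : Group) : Prop :=
  exists m : nat, (1 <= m)%nat /\ forall x : G, infinite_height p (gpow x m).

(* Words representing elements of G * F({x_j : j in J}):
   a constant of G, or x_j (true) / x_j^-1 (false). *)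
Inductive letter (G : Group) (J : Type) : Type :=
  | Const : carrier G -> letter G J
  | Var : J -> bool -> letter G J.
Arguments Const {G J} _.
Arguments Var {G J} _ _.

Definition word (G : Group) (J : Type) := list (letter G J).

Definition eval_letter {G : Group} {J : Type} (a : J -> G) (l : letter G J) : G :=
  match l with
  | Const g => g
  | Var j true => a j
  | Var j false => ginv (a j)
  end.

Definition eval_word {G : Group} {J : Type} (a : J -> G) (w : word G J) : G :=
  fold_right (fun l acc => gmul (eval_letter a l) acc) gone w.

Definition letter_exp {G : Group} {J : Type} (j : J) (l : letter G J) : Z :=
  match l with
  | Const _ => 0
  | Var k b =>
      if excluded_middle_informative (k = j) then (if b then 1 else -1) else 0
  end.

Definition exp_sum {G : Group} {J : Type} (w : word G J) (j : J) : Z :=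
  fold_right (fun l acc => letter_exp j l + acc) 0 w.

(* The system {w i = 1 : i in I} is p-nonsingular: every finite set of
   exponent-sum rows is linearly independent over F_p. *)
Definition p_nonsingular (p : nat) {G : Group} {I J : Type}
    (w : I -> word G J) : Prop :=
  forall (s : list I) (c : I -> Z), NoDup s ->
    (forall j : J, (Z.of_nat p | fold_right (fun i acc => c i * exp_sum (w i) j + acc) 0 s)) ->
    forall i, In i s -> (Z.of_nat p | c i).

Definition has_solution {G : Group} {I J : Type} (w : I -> word G J) : Prop :=
  exists a : J -> G, forall i : I, eval_word a (w i) = gone.

(* Let G_0 be the subgroup of elements of infinite height. In a nilpotent p-group of class c an
   element of infinite height is a p^(e c)-th power, and such powers commute with every element of
   order p^e; so G_0 is central, and it is divisible, while G/G_0 has some exponent p^v.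
   A p-nonsingular system is solved successively modulo the terms of the upper central series of
   G/G_0 and finally modulo 1. At each step an approximate solution is corrected by elements of a
   central factor S/N, which turns the problem into a linear system over the abelian group S/N with
   matrix the exponent sums: of exponent p^v for the factors of the series, divisible for G_0.
   Over a group of exponent p^v, complete the rows by unit vectors e_k to a maximal family that is
   independent mod p (Zorn); every e_j is then a combination of it modulo p^v. Over a divisible
   group the rows are Z-independent and Baer's extension argument (Zorn on partial solutions)
   applies. *)

From Stdlib Require Import ZArith List Znumtheory Lia Arith.
From Stdlib Require Import Classical ClassicalEpsilon.
From Stdlib Require Import FunctionalExtensionality PropExtensionality ProofIrrelevance.
From mathcomp Require classical_sets.
Import ListNotations.
Local Open Scope nat_scope.

(** * Groups, normal subgroups and the upper central series *)

Section GroupFacts.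
Variable G : Group.
Local Notation "x * y" := (@gmul G x y).
Local Notation "1" := (@gone G).
Local Notation "x ^-1" := (@ginv G x) (at level 2).

Lemma mulgA_r (x y z : G) : (x * y) * z = x * (y * z).
Proof. now rewrite gmulA. Qed.

Lemma mulKg (x y : G) : x^-1 * (x * y) = y.
Proof. now rewrite gmulA, gmulV, gmul1. Qed.

Lemma mulgV (x : G) : x * x^-1 = 1.
Proof.
  rewrite <- (gmul1 G (x * x^-1)), <- (gmulV G (x^-1)) at 1.
  rewrite <- gmulA, (gmulA _ (x^-1) x), gmulV, gmul1. apply gmulV.
Qed.

Lemma mulg1 (x : G) : x * 1 = x.
Proof. now rewrite <- (gmulV G x), gmulA, mulgV, gmul1. Qed.

Lemma mulKVg (x y : G) : x * (x^-1 * y) = y.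
Proof. now rewrite gmulA, mulgV, gmul1. Qed.

Lemma mulgI (x y z : G) : x * y = x * z -> y = z.
Proof. intros H. now rewrite <- (mulKg x y), H, mulKg. Qed.

Lemma invgK (x : G) : (x^-1)^-1 = x.
Proof. apply (mulgI (x^-1)). now rewrite mulgV, gmulV. Qed.

Lemma invMg (x y : G) : (x * y)^-1 = y^-1 * x^-1.
Proof. apply (mulgI (x * y)). now rewrite mulgV, mulgA_r, mulKVg, mulgV. Qed.

Lemma invg1 : (1 : G)^-1 = 1.
Proof. rewrite <- (mulg1 (1^-1)). apply gmulV. Qed.
End GroupFacts.

Ltac group_simpl := repeat (rewrite ?mulgA_r, ?gmul1, ?mulg1, ?gmulV, ?mulgV, ?mulKg, ?mulKVg,
    ?invMg, ?invgK, ?invg1).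
Ltac group := group_simpl; reflexivity.

Section Powers.
Variable G : Group.
Local Notation "x * y" := (@gmul G x y).
Local Notation "1" := (@gone G).
Local Notation "x ^-1" := (@ginv G x) (at level 2).

Lemma gpowD (x : G) m n : gpow x (m + n) = gpow x m * gpow x n.
Proof. induction m; simpl. - now rewrite gmul1. - rewrite IHm. group. Qed.

Lemma gpowSr (x : G) n : gpow x (S n) = gpow x n * x.
Proof. rewrite <- Nat.add_1_r, gpowD. simpl. now rewrite mulg1. Qed.

Lemma gpowM (x : G) m n : gpow x (m * n) = gpow (gpow x m) n.
Proof.
  induction n; simpl.
  - now rewrite Nat.mul_0_r.
  - now rewrite Nat.mul_succ_r, gpowD, IHn, <- gpowSr.
Qed.

Lemma gpow1g n : gpow (1 : G) n = 1.
Proof. induction n; simpl; auto. now rewrite IHn, gmul1. Qed.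

Lemma gpowVg (x : G) n : gpow (x^-1) n = (gpow x n)^-1.
Proof.
  induction n; simpl.
  - now rewrite invg1.
  - now rewrite IHn, <- invMg, <- gpowSr.
Qed.

Lemma gpowMg (x y : G) n : x * y = y * x -> gpow (x * y) n = gpow x n * gpow y n.
Proof.
  intros Hxy.
  assert (Hy : forall k, y * gpow x k = gpow x k * y).
  { induction k; simpl. - now rewrite gmul1, mulg1. - rewrite gmulA, <- Hxy, mulgA_r, IHk. group. }
  induction n; simpl.
  - now rewrite gmul1.
  - rewrite IHn, !mulgA_r. f_equal. rewrite !gmulA. f_equal. apply Hy.
Qed.

Definition conjg (h x : G) : G := h^-1 * (x * h).

Lemma conjgM h x y : conjg h (x * y) = conjg h x * conjg h y.
Proof. unfold conjg. group. Qed.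

Lemma conjgX h x n : conjg h (gpow x n) = gpow (conjg h x) n.
Proof. induction n; simpl. - unfold conjg. group. - now rewrite conjgM, IHn. Qed.
End Powers.

Arguments conjg {G} h x.

Section NormalSubgroups.
Context {G : Group}.
Local Notation "x * y" := (@gmul G x y).
Local Notation "1" := (@gone G).
Local Notation "x ^-1" := (@ginv G x) (at level 2).

Definition normal (N : G -> Prop) :=
  N 1 /\ (forall x y, N x -> N y -> N (x * y)) /\ (forall x, N x -> N x^-1) /\
  (forall h x, N x -> N (conjg h x)).

Definition congr_mod (N : G -> Prop) (x y : G) := N (x^-1 * y).

Definition central_mod (N : G -> Prop) (z : G) := forall g, congr_mod N (g * z) (z * g).

Definition trivial_subgroup (x : G) : Prop := x = 1.

Lemma normal_trivial : normal trivial_subgroup.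
Proof.
  unfold normal, trivial_subgroup. repeat split.
  - intros x y -> ->. apply gmul1.
  - intros x ->. apply invg1.
  - intros h x ->. unfold conjg. group.
Qed.

Section Congruence.
Context {N : G -> Prop}.
Hypothesis HN : normal N.

Lemma normal1 : N 1. Proof. apply HN. Qed.
Lemma normalM x y : N x -> N y -> N (x * y). Proof. apply HN. Qed.
Lemma normalV x : N x -> N x^-1. Proof. apply HN. Qed.
Lemma normalJ h x : N x -> N (conjg h x). Proof. apply HN. Qed.

Lemma normal_eq x y : x = y -> N x -> N y. Proof. now intros ->. Qed.

Lemma congr_refl x : congr_mod N x x.
Proof. unfold congr_mod. rewrite gmulV. apply normal1. Qed.

Lemma congr_eq x y : x = y -> congr_mod N x y.
Proof. intros ->. apply congr_refl. Qed.

Lemma congr_sym x y : congr_mod N x y -> congr_mod N y x.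
Proof. unfold congr_mod. intros H. apply normalV in H. revert H. apply normal_eq. group. Qed.

Lemma congr_trans x y z : congr_mod N x y -> congr_mod N y z -> congr_mod N x z.
Proof. unfold congr_mod. intros H1 H2. generalize (normalM _ _ H1 H2). apply normal_eq. group. Qed.

Lemma congr_mul x x' y y' : congr_mod N x x' -> congr_mod N y y' -> congr_mod N (x * y) (x' * y').
Proof.
  unfold congr_mod. intros H1 H2. generalize (normalM _ _ (normalJ y _ H1) H2).
  apply normal_eq. unfold conjg. group.
Qed.

Lemma congr_mull x y y' : congr_mod N y y' -> congr_mod N (x * y) (x * y').
Proof. apply congr_mul, congr_refl. Qed.

Lemma congr_mulr x x' y : congr_mod N x x' -> congr_mod N (x * y) (x' * y).
Proof. intros H. apply congr_mul. exact H. apply congr_refl. Qed.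

Lemma congr1 x : congr_mod N 1 x <-> N x.
Proof. unfold congr_mod. rewrite invg1, gmul1. tauto. Qed.

Lemma congr_normal x y : congr_mod N x y -> N y -> N x.
Proof.
  unfold congr_mod. intros H1 H2. apply normalV in H1. generalize (normalM _ _ H2 H1).
  apply normal_eq. group.
Qed.

Lemma central_mod_conj z h : central_mod N z -> congr_mod N (conjg h z) z.
Proof.
  intros Hz. specialize (Hz h). unfold congr_mod in *. apply normalV in Hz.
  revert Hz. apply normal_eq. unfold conjg. group.
Qed.

Lemma central_mod_powM z y n : central_mod N z ->
  congr_mod N (gpow (y * z) n) (gpow y n * gpow z n).
Proof.
  intros Hz. induction n; simpl.
  - apply congr_eq. group.
  - apply congr_trans with ((y * z) * (gpow y n * gpow z n)).
    + now apply congr_mull.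
    + apply congr_trans with (y * ((gpow y n * z) * gpow z n)).
      * rewrite !mulgA_r. apply congr_mull. rewrite <- !mulgA_r. apply congr_mulr.
        apply congr_sym, Hz.
      * apply congr_eq. group.
Qed.

Lemma central_mod_conjX u y z n : central_mod N z -> conjg u y = y * z ->
  congr_mod N (conjg (gpow u n) y) (y * gpow z n).
Proof.
  intros Hz Hu. induction n; simpl.
  - apply congr_eq. unfold conjg. group.
  - apply congr_trans with (conjg (gpow u n) (conjg u y)).
    + apply congr_eq. unfold conjg. group.
    + rewrite Hu, conjgM. apply congr_trans with ((y * gpow z n) * z).
      * apply congr_mul. exact IHn. now apply central_mod_conj.
      * apply congr_eq. change (z * gpow z n) with (gpow z (S n)). rewrite gpowSr. group.
Qed.

(* Conjugation by u multiplies y by z = [y, u], so conjugation by u^n multiplies it by z^n;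
   and z^n lies in N since (y z)^n is conjugate to y^n = 1. *)
Lemma comm_pow_mod u y n : central_mod N (gcomm y u) -> gpow y n = 1 ->
  N (gcomm (gpow u n) y).
Proof.
  intros Hz Hy. set (z := gcomm y u) in *.
  assert (Hu : conjg u y = y * z) by (unfold z, conjg, gcomm; group).
  assert (Hzn : N (gpow z n)).
  { apply congr1. apply congr_trans with (gpow (y * z) n).
    - apply congr_eq. rewrite <- Hu, <- conjgX, Hy. unfold conjg. group.
    - apply congr_trans with (gpow y n * gpow z n). now apply central_mod_powM.
      rewrite Hy. apply congr_eq. group. }
  pose proof (central_mod_conjX u y z n Hz Hu) as H.
  unfold congr_mod in H. generalize (normalM _ _ H (normalV _ Hzn)).
  apply normal_eq. unfold conjg, gcomm. group.
Qed.
End Congruence.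
End NormalSubgroups.

Section UpperCentralSeries.
Variable G : Group.
Local Notation "x * y" := (@gmul G x y).
Local Notation "1" := (@gone G).
Local Notation "x ^-1" := (@ginv G x) (at level 2).

(* [upper_central N k] is the preimage in G of the k-th term of the upper central series of G/N. *)
Fixpoint upper_central (N : G -> Prop) (k : nat) (x : G) : Prop :=
  match k with
  | O => N x
  | S k => forall y, upper_central N k (gcomm x y)
  end.

Variable N : G -> Prop.
Hypothesis HN : normal N.

Lemma upper_central_normal k : normal (upper_central N k).
Proof.
  induction k as [|k IH]; simpl; auto.
  repeat split.
  - intros y. apply (normal_eq 1). unfold gcomm. group. apply normal1, IH.
  - intros x x' Hx Hx' g. generalize (normalM IH _ _ (normalJ IH x' _ (Hx g)) (Hx' g)).
    apply normal_eq. unfold conjg, gcomm. group.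
  - intros x Hx g. generalize (normalJ IH (x^-1) _ (normalV IH _ (Hx g))).
    apply normal_eq. unfold conjg, gcomm. group.
  - intros h x Hx g. generalize (normalJ IH h _ (Hx (h * (g * h^-1)))).
    apply normal_eq. unfold conjg, gcomm. group.
Qed.

Lemma upper_centralS k x : upper_central N k x -> upper_central N (S k) x.
Proof.
  revert x. induction k as [|k IH]; simpl; intros x Hx y.
  - unfold gcomm. generalize (normalM HN _ _ (normalV HN _ Hx) (normalJ HN y _ Hx)).
    apply normal_eq. unfold conjg. group.
  - apply IH, Hx.
Qed.

Lemma upper_central_of_normal k x : N x -> upper_central N k x.
Proof. intros Hx. induction k; [exact Hx | now apply upper_centralS]. Qed.

Lemma upper_central_central k x : upper_central N (S k) x -> central_mod (upper_central N k) x.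
Proof. intros H g. unfold congr_mod. generalize (H g). apply normal_eq. unfold gcomm. group. Qed.

Lemma comm_pow_upper_central_step k u y n :
  upper_central N (S k) (gcomm u y) -> gpow y n = 1 -> upper_central N k (gcomm (gpow u n) y).
Proof.
  intros Huy Hy. apply comm_pow_mod; auto using upper_central_normal.
  apply upper_central_central. generalize (normalV (upper_central_normal (S k)) _ Huy).
  apply normal_eq. unfold gcomm. group.
Qed.

Lemma comm_pow_upper_central k t x y n : gpow y n = 1 ->
  upper_central N (t + k) (gcomm x y) -> upper_central N k (gcomm (gpow x (Nat.pow n t)) y).
Proof.
  intros Hy. revert k. induction t as [|t IH]; intros k Hxy; simpl in *.
  - now rewrite mulg1.
  - rewrite Nat.mul_comm, gpowM. apply comm_pow_upper_central_step; auto.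
    apply IH. now rewrite <- Nat.add_succ_comm.
Qed.
End UpperCentralSeries.

Arguments upper_central {G} N k x.

Lemma upper_central_mono (G : Group) (N N' : G -> Prop) k x :
  (forall y, N y -> N' y) -> upper_central N k x -> upper_central N' k x.
Proof. intros H. revert x. induction k; simpl; auto. Qed.

Lemma nilpotent_upper_central (G : Group) :
  nilpotent G -> exists c, forall x : G, upper_central trivial_subgroup c x.
Proof.
  intros [c Hc]. exists c. intros x.
  assert (H : forall k (x : G), (forall ys, length ys = k -> trivial_subgroup (fold_left gcomm ys x)) ->
                upper_central trivial_subgroup k x).
  { induction k as [|k IH]; simpl; intros x' Hx'.
    - exact (Hx' [] eq_refl).
    - intros y. apply IH. intros ys Hl. apply (Hx' (y :: ys)). simpl. now rewrite Hl. }
  apply H. exact (Hc x).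
Qed.

Lemma nilpotent_comm_pow (G : Group) c (x y : G) n :
  (forall x : G, upper_central trivial_subgroup c x) -> gpow y n = gone ->
  gcomm (gpow x (Nat.pow n c)) y = gone.
Proof.
  intros Hc Hy. apply (comm_pow_upper_central G trivial_subgroup normal_trivial 0 c x y n Hy).
  rewrite Nat.add_0_r. apply Hc.
Qed.

(** * Elements of infinite height *)

Lemma least_nat (P : nat -> Prop) : (exists n, P n) -> exists n, P n /\ forall m, P m -> n <= m.
Proof.
  intros Hex. destruct (dec_inh_nat_subset_has_unique_least_element P (fun n => classic (P n)) Hex)
    as [n [Hn _]]. now exists n.
Qed.

Section PrimeArithmetic.
Variable p : nat.
Hypothesis Hp : prime (Z.of_nat p).

Lemma prime_gt1 : 1 < p.
Proof. destruct Hp. lia. Qed.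

Lemma prime_pos : 0 < p.
Proof. pose proof prime_gt1. lia. Qed.

Lemma pow_prime_pos e : 0 < Nat.pow p e.
Proof. pose proof prime_gt1. apply Nat.neq_0_lt_0, Nat.pow_nonzero. lia. Qed.

Lemma p_part_decomposition k : 0 < k ->
  exists s u, k = Nat.pow p s * u /\ ~ (Z.of_nat p | Z.of_nat u).
Proof.
  induction k as [k IH] using (well_founded_induction lt_wf). intros Hk.
  pose proof prime_gt1.
  destruct (classic (Z.of_nat p | Z.of_nat k)) as [[z Hz]|Hndiv].
  - destruct (IH (Z.to_nat z)) as [s [u [E Hu]]]; try nia.
    exists (S s), u. split; auto. simpl. nia.
  - exists 0, k. simpl. split; [lia | auto].
Qed.

Lemma inverse_mod_prime_pow u e : ~ (Z.of_nat p | Z.of_nat u) ->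
  exists u' t, u * u' = 1 + t * Nat.pow p e.
Proof.
  intros Hu. set (P := Z.of_nat (Nat.pow p e)).
  assert (HP : (0 < P)%Z) by (pose proof (pow_prime_pos e); unfold P; lia).
  assert (Hcop : rel_prime (Z.of_nat u) P).
  { unfold P. clear HP. induction e as [|e IH]; simpl.
    - apply rel_prime_sym, rel_prime_1.
    - rewrite Nat2Z.inj_mul. apply rel_prime_mult; auto.
      apply rel_prime_sym, prime_rel_prime; auto. }
  assert (Hu0 : (0 < Z.of_nat u)%Z).
  { destruct u; [|lia]. exfalso. apply Hu, Z.divide_0_r. }
  destruct (rel_prime_bezout _ _ Hcop) as [a b Hab].
  pose proof (Z.div_mod a P ltac:(lia)). pose proof (Z.mod_pos_bound a P HP).
  set (t := (- b - Z.of_nat u * (a / P))%Z).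
  assert (Hur : (Z.of_nat u * (a mod P) = 1 + P * t)%Z) by (unfold t; nia).
  assert (Ht : (0 <= t + Z.of_nat u)%Z) by nia.
  exists (Z.to_nat (a mod P + P)), (Z.to_nat (t + Z.of_nat u)).
  apply Nat2Z.inj. rewrite Nat2Z.inj_add, !Nat2Z.inj_mul, !Z2Nat.id by lia. fold P. nia.
Qed.
End PrimeArithmetic.

Section InfiniteHeight.
Variable p : nat.
Variable G : Group.
Hypothesis Hp : prime (Z.of_nat p).
Hypothesis Hpg : p_group p G.
Local Notation "x * y" := (@gmul G x y).
Local Notation "1" := (@gone G).
Local Notation "x ^-1" := (@ginv G x) (at level 2).

Lemma pow_coprime_cancel (x : G) u : ~ (Z.of_nat p | Z.of_nat u) ->
  exists u', gpow x (u * u') = x.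
Proof.
  intros Hu. destruct (Hpg x) as [e He].
  destruct (inverse_mod_prime_pow p Hp u e Hu) as [u' [t Ht]].
  exists u'. rewrite Ht, gpowD, Nat.mul_comm, gpowM, He, gpow1g, mulg1. simpl. apply mulg1.
Qed.

Definition of_infinite_height (x : G) := forall n, height_ge p x n.

Lemma height_ge_le (x : G) n m : m <= n -> height_ge p x n -> height_ge p x m.
Proof.
  intros Hmn [h Hh]. exists (gpow h (Nat.pow p (n - m))).
  rewrite <- gpowM, <- Nat.pow_add_r. now replace (n - m + m) with n by lia.
Qed.

Lemma infinite_heightE (x : G) : infinite_height p x <-> of_infinite_height x.
Proof.
  split.
  - intros Hinf n. apply NNPP. intros Hn.
    destruct (least_nat (fun n => ~ height_ge p x n)) as [n0 [Hn0 Hleast]]; [now exists n|].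
    destruct n0 as [|n1].
    { apply Hn0. exists x. simpl. apply mulg1. }
    apply Hinf. exists n1. split.
    + apply NNPP. intros H. specialize (Hleast n1 H). lia.
    + intros m Hm. apply Nat.lt_succ_r, Nat.nle_gt. intros Hle. apply Hn0.
      exact (height_ge_le x m (S n1) Hle Hm).
  - intros H [n [_ Hn]]. specialize (Hn (S n) (H (S n))). lia.
Qed.

Lemma of_infinite_height_pow (x : G) k : of_infinite_height x -> of_infinite_height (gpow x k).
Proof.
  intros H n. destruct (H n) as [h Hh]. exists (gpow h k).
  now rewrite <- !gpowM, Nat.mul_comm, gpowM, Hh.
Qed.

Lemma of_infinite_height_root (x : G) k : of_infinite_height x -> 0 < k -> exists g, gpow g k = x.
Proof.
  intros Hx Hk. destruct (p_part_decomposition p Hp k Hk) as [s [u [-> Hu]]].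
  destruct (Hx s) as [h Hh]. destruct (pow_coprime_cancel h u Hu) as [u' Hu'].
  exists (gpow h u'). rewrite <- gpowM.
  replace (u' * (Nat.pow p s * u))%nat with (u * u' * Nat.pow p s)%nat by ring.
  now rewrite gpowM, Hu', Hh.
Qed.

Variable c : nat.
Hypothesis Hnil : forall x : G, upper_central trivial_subgroup c x.

(* An element of infinite height is a p^(e c)-th power, hence commutes with every y of order p^e. *)
Lemma of_infinite_height_central (x : G) : of_infinite_height x -> forall y, x * y = y * x.
Proof.
  intros Hx y. destruct (Hpg y) as [e He]. destruct (Hx (e * c)%nat) as [h Hh].
  pose proof (nilpotent_comm_pow G c h y (Nat.pow p e) Hnil He) as H.
  rewrite <- Nat.pow_mul_r, Hh in H. unfold gcomm in H.
  apply (mulgI G (x^-1 * y^-1)). rewrite H. group.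
Qed.

Variable m : nat.
Hypothesis Hm1 : 1 <= m.
Hypothesis Hm : forall x : G, of_infinite_height (gpow x m).

Lemma of_infinite_height_divisible (x : G) d : of_infinite_height x -> 0 < d ->
  exists y, of_infinite_height y /\ gpow y d = x.
Proof.
  intros Hx Hd. destruct (of_infinite_height_root x (m * d)%nat Hx ltac:(nia)) as [g Hg].
  exists (gpow g m). split; auto. now rewrite <- gpowM.
Qed.

Lemma normal_of_infinite_height : normal of_infinite_height.
Proof.
  repeat split.
  - intros n. exists 1. apply gpow1g.
  - intros x y Hx Hy n.
    destruct (of_infinite_height_divisible x _ Hx (pow_prime_pos p Hp n)) as [a [Ha <-]].
    destruct (of_infinite_height_divisible y _ Hy (pow_prime_pos p Hp n)) as [b [Hb <-]].
    exists (a * b). apply gpowMg, of_infinite_height_central, Ha.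
  - intros x Hx n. destruct (Hx n) as [h Hh]. exists (h^-1). now rewrite gpowVg, Hh.
  - intros h x Hx. unfold conjg. rewrite (of_infinite_height_central x Hx h). now rewrite mulKg.
Qed.

Lemma exponent_mod_infinite_height : exists v, forall x : G, of_infinite_height (gpow x (Nat.pow p v)).
Proof.
  destruct (p_part_decomposition p Hp m Hm1) as [v [u [Em Hu]]].
  exists v. intros x. destruct (pow_coprime_cancel (gpow x (Nat.pow p v)) u Hu) as [u' Hu'].
  rewrite <- Hu', <- gpowM, Nat.mul_assoc, <- Em, gpowM. apply of_infinite_height_pow, Hm.
Qed.
End InfiniteHeight.

(** * Abelian groups and formal integer combinations *)

Record AbGroup := {
  acar :> Type;
  aadd : acar -> acar -> acar;
  azero : acar;
  aopp : acar -> acar;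
  aaddA : forall x y z, aadd x (aadd y z) = aadd (aadd x y) z;
  aaddC : forall x y, aadd x y = aadd y x;
  aadd0 : forall x, aadd azero x = x;
  aaddN : forall x, aadd (aopp x) x = azero
}.
Arguments aadd {a} _ _.
Arguments azero {a}.
Arguments aopp {a} _.
Arguments aaddA {a} x y z.
Arguments aaddC {a} x y.
Arguments aadd0 {a} x.
Arguments aaddN {a} x.

Definition Zab : AbGroup :=
  {| acar := Z; aadd := Z.add; azero := 0%Z; aopp := Z.opp;
     aaddA := Z.add_assoc; aaddC := Z.add_comm; aadd0 := Z.add_0_l; aaddN := Z.add_opp_diag_l |}.

Definition delta {X : Type} (x y : X) : Z := if excluded_middle_informative (x = y) then 1%Z else 0%Z.

Section AbelianGroupFacts.
Variable A : AbGroup.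
Local Infix "+'" := (@aadd A) (at level 50, left associativity).
Local Notation "0'" := (@azero A).
Local Notation "-' x" := (@aopp A x) (at level 35, right associativity).

Lemma addr0 (x : A) : x +' 0' = x. Proof. rewrite aaddC. apply aadd0. Qed.
Lemma addrN (x : A) : x +' -' x = 0'. Proof. rewrite aaddC. apply aaddN. Qed.
Lemma addKr (x y : A) : -' x +' (x +' y) = y. Proof. now rewrite aaddA, aaddN, aadd0. Qed.
Lemma addrK (x y : A) : (x +' y) +' -' y = x. Proof. now rewrite <- aaddA, addrN, addr0. Qed.
Lemma addrI (x y z : A) : x +' y = x +' z -> y = z.
Proof. intros H. now rewrite <- (addKr x y), H, addKr. Qed.
Lemma opprK (x : A) : -' -' x = x.
Proof. apply (addrI (-' x)). now rewrite aaddN, addrN. Qed.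
Lemma oppr0 : -' (0' : A) = 0'. Proof. rewrite <- (addr0 (-' 0')). apply aaddN. Qed.
Lemma addrCA (x y z : A) : x +' (y +' z) = y +' (x +' z).
Proof. now rewrite !aaddA, (aaddC x y). Qed.
Lemma addrACA (x y z t : A) : (x +' y) +' (z +' t) = (x +' z) +' (y +' t).
Proof. rewrite <- !aaddA. f_equal. apply addrCA. Qed.
Lemma opprD (x y : A) : -' (x +' y) = -' x +' -' y.
Proof. apply (addrI (x +' y)). now rewrite addrN, addrACA, !addrN, aadd0. Qed.
Lemma subr0_eq (x y : A) : x +' -' y = 0' -> x = y.
Proof. intros H. now rewrite <- (aadd0 y), <- H, <- aaddA, aaddN, addr0. Qed.

Fixpoint natmul (n : nat) (x : A) : A := match n with O => 0' | S n => x +' natmul n x end.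

Definition zmul (n : Z) (x : A) : A :=
  match n with
  | Z0 => 0'
  | Zpos k => natmul (Pos.to_nat k) x
  | Zneg k => -' natmul (Pos.to_nat k) x
  end.

Lemma natmulD m n x : natmul (m + n) x = natmul m x +' natmul n x.
Proof. induction m; simpl. now rewrite aadd0. now rewrite IHm, aaddA. Qed.
Lemma natmulDr n x y : natmul n (x +' y) = natmul n x +' natmul n y.
Proof. induction n; simpl. now rewrite aadd0. rewrite IHn. apply addrACA. Qed.
Lemma natmul0r n : natmul n (0' : A) = 0'.
Proof. induction n; simpl; auto. now rewrite IHn, aadd0. Qed.
Lemma natmulNr n x : natmul n (-' x) = -' natmul n x.
Proof. induction n; simpl. now rewrite oppr0. now rewrite IHn, opprD. Qed.

Lemma zmul_nat (n : nat) x : zmul (Z.of_nat n) x = natmul n x.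
Proof. destruct n. reflexivity. simpl. now rewrite SuccNat2Pos.id_succ. Qed.
Lemma zmulN n x : zmul (- n) x = -' zmul n x.
Proof. destruct n; simpl; auto. now rewrite oppr0. now rewrite opprK. Qed.

Lemma zmul_sub_nat (a b : nat) x : zmul (Z.of_nat a - Z.of_nat b) x = natmul a x +' -' natmul b x.
Proof.
  destruct (Nat.le_gt_cases b a) as [H|H].
  - replace (Z.of_nat a - Z.of_nat b)%Z with (Z.of_nat (a - b)) by lia. rewrite zmul_nat.
    replace a with ((a - b) + b) at 2 by lia. now rewrite natmulD, addrK.
  - replace (Z.of_nat a - Z.of_nat b)%Z with (- Z.of_nat (b - a))%Z by lia. rewrite zmulN, zmul_nat.
    replace b with ((b - a) + a) at 2 by lia. now rewrite natmulD, opprD, addrCA, addrN, addr0.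
Qed.

Lemma Z_as_sub_nat (n : Z) : exists a b : nat, n = (Z.of_nat a - Z.of_nat b)%Z.
Proof. exists (Z.to_nat n), (Z.to_nat (- n)). lia. Qed.

Lemma zmulD m n x : zmul (m + n) x = zmul m x +' zmul n x.
Proof.
  destruct (Z_as_sub_nat m) as [a [b ->]], (Z_as_sub_nat n) as [c [d ->]].
  replace (Z.of_nat a - Z.of_nat b + (Z.of_nat c - Z.of_nat d))%Z
    with (Z.of_nat (a + c) - Z.of_nat (b + d))%Z by lia.
  rewrite !zmul_sub_nat, !natmulD, opprD. apply addrACA.
Qed.
Lemma zmulDr n x y : zmul n (x +' y) = zmul n x +' zmul n y.
Proof. destruct n; simpl. now rewrite aadd0. apply natmulDr. now rewrite natmulDr, opprD. Qed.
Lemma zmulNr n x : zmul n (-' x) = -' zmul n x.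
Proof. destruct n; simpl. now rewrite oppr0. apply natmulNr. now rewrite natmulNr. Qed.
Lemma zmul1 x : zmul 1 x = x. Proof. simpl. apply addr0. Qed.
Lemma zmulN1 x : zmul (-1) x = -' x. Proof. simpl. now rewrite addr0. Qed.
Lemma zmul0r n : zmul n (0' : A) = 0'. Proof. destruct n; simpl; rewrite ?natmul0r, ?oppr0; auto. Qed.
Lemma zmulM m n x : zmul (m * n) x = zmul m (zmul n x).
Proof.
  destruct (Z_as_sub_nat m) as [a [b ->]].
  replace ((Z.of_nat a - Z.of_nat b) * n)%Z with (Z.of_nat a * n - Z.of_nat b * n)%Z by ring.
  assert (H : forall c : nat, zmul (Z.of_nat c * n) x = natmul c (zmul n x)).
  { induction c. reflexivity. rewrite Nat2Z.inj_succ, Z.mul_succ_l, zmulD, IHc. apply aaddC. }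
  rewrite zmul_sub_nat. unfold Z.sub. now rewrite zmulD, zmulN, !H.
Qed.

Definition lsum {X : Type} (f : X -> A) (l : list X) : A := fold_right (fun x acc => f x +' acc) 0' l.

Lemma lsum_nil {X} (f : X -> A) : lsum f [] = 0'. Proof. reflexivity. Qed.
Lemma lsum_cons {X} (f : X -> A) x l : lsum f (x :: l) = f x +' lsum f l. Proof. reflexivity. Qed.
Lemma lsum_app {X} (f : X -> A) l1 l2 : lsum f (l1 ++ l2) = lsum f l1 +' lsum f l2.
Proof.
  induction l1 as [|x l1 IH]; cbn [app].
  - now rewrite lsum_nil, aadd0.
  - now rewrite !lsum_cons, IH, aaddA.
Qed.
Lemma lsumD {X} (f g : X -> A) l : lsum (fun x => f x +' g x) l = lsum f l +' lsum g l.
Proof.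
  induction l as [|x l IH].
  - now rewrite !lsum_nil, aadd0.
  - rewrite !lsum_cons, IH. apply addrACA.
Qed.
Lemma eq_lsum {X} (f g : X -> A) l : (forall x, In x l -> f x = g x) -> lsum f l = lsum g l.
Proof.
  induction l as [|x l IH]; intros H; auto.
  rewrite !lsum_cons, (H x (or_introl eq_refl)), IH; auto.
  intros y Hy. apply H. now right.
Qed.
Lemma lsum0 {X} (f : X -> A) l : (forall x, In x l -> f x = 0') -> lsum f l = 0'.
Proof.
  induction l as [|x l IH]; intros H; auto.
  rewrite lsum_cons, (H x (or_introl eq_refl)), IH, aadd0; auto.
  intros y Hy. apply H. now right.
Qed.
Lemma lsum_zmul {X} (f : X -> A) n l : lsum (fun x => zmul n (f x)) l = zmul n (lsum f l).
Proof.
  induction l.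
  - now rewrite !lsum_nil, zmul0r.
  - now rewrite !lsum_cons, IHl, zmulDr.
Qed.
Lemma lsum_map {X Y} (f : Y -> A) (g : X -> Y) l : lsum f (map g l) = lsum (fun x => f (g x)) l.
Proof. induction l; auto. cbn [map]. now rewrite !lsum_cons, IHl. Qed.
Lemma lsum_concat {X Y} (f : Y -> A) (g : X -> list Y) l :
  lsum f (concat (map g l)) = lsum (fun x => lsum f (g x)) l.
Proof. induction l; auto. cbn [map concat]. now rewrite lsum_app, lsum_cons, IHl. Qed.

Lemma lsum_delta {X} (f : X -> A) (s : list X) x0 : NoDup s -> In x0 s ->
  lsum (fun x => zmul (delta x0 x) (f x)) s = f x0.
Proof.
  induction s as [|x s IH]; intros Hn Hin; [contradiction|]. inversion Hn as [|? ? Hx Hs]; subst.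
  rewrite lsum_cons. unfold delta at 1. destruct excluded_middle_informative as [<-|Hne].
  - rewrite lsum0, zmul1, addr0; auto. intros y Hy. unfold delta.
    destruct excluded_middle_informative; subst; [contradiction | reflexivity].
  - destruct Hin as [->|Hin]; [contradiction|]. rewrite IH; auto. apply aadd0.
Qed.
End AbelianGroupFacts.

Arguments natmul {A} n x.
Arguments zmul {A} n x.
Arguments lsum {A X} f l.

Lemma zmul_Z (n x : Z) : @zmul Zab n x = (n * x)%Z.
Proof.
  assert (H : forall k : nat, @natmul Zab k x = (Z.of_nat k * x)%Z).
  { induction k. reflexivity. cbn [natmul aadd Zab]. rewrite IHk, Nat2Z.inj_succ. lia. }
  destruct n as [|k|k]; [reflexivity| |].
  - change (@zmul Zab (Z.pos k) x) with (@natmul Zab (Pos.to_nat k) x). now rewrite H, positive_nat_Z.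
  - change (@zmul Zab (Z.neg k) x) with (- @natmul Zab (Pos.to_nat k) x)%Z.
    rewrite H, positive_nat_Z. lia.
Qed.

(* A list [l : list (X * Z)] stands for the formal integer combination sum_(x, n) in l of n x. *)
Definition eval_combo {A : AbGroup} {X : Type} (f : X -> A) (l : list (X * Z)) : A :=
  lsum (fun pn => zmul (snd pn) (f (fst pn))) l.

Definition zcombo {X : Type} (f : X -> Z) (l : list (X * Z)) : Z := @eval_combo Zab X f l.

Definition classic_eq_dec {X : Type} (x y : X) : {x = y} + {x <> y} := excluded_middle_informative (x = y).

Definition coef {X : Type} (l : list (X * Z)) (x : X) : Z := zcombo (fun y => delta y x) l.

Definition scale {X : Type} (t : Z) (l : list (X * Z)) : list (X * Z) :=
  map (fun pn => (fst pn, (t * snd pn)%Z)) l.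

Definition combo_bind {X Y : Type} (g : X -> list (Y * Z)) (l : list (X * Z)) : list (Y * Z) :=
  concat (map (fun pn => scale (snd pn) (g (fst pn))) l).

Definition support {X : Type} (l : list (X * Z)) : list X := nodup classic_eq_dec (map fst l).

Lemma NoDup_support {X : Type} (l : list (X * Z)) : NoDup (support l).
Proof. apply NoDup_nodup. Qed.

Lemma in_support {X : Type} (l : list (X * Z)) pn : In pn l -> In (fst pn) (support l).
Proof. intros H. apply nodup_In, in_map, H. Qed.

Lemma coef_cons {X : Type} (y : X) n l x : coef ((y, n) :: l) x = (n * delta y x + coef l x)%Z.
Proof. unfold coef, zcombo, eval_combo. rewrite lsum_cons. cbn [fst snd aadd Zab]. now rewrite zmul_Z. Qed.

Section Combinations.
Variable A : AbGroup.
Local Infix "+'" := (@aadd A) (at level 50, left associativity).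
Local Notation "0'" := (@azero A).

Lemma eval_combo_cons {X : Type} (f : X -> A) x n l :
  eval_combo f ((x, n) :: l) = zmul n (f x) +' eval_combo f l.
Proof. reflexivity. Qed.

Lemma eval_combo_app {X : Type} (f : X -> A) l1 l2 :
  eval_combo f (l1 ++ l2) = eval_combo f l1 +' eval_combo f l2.
Proof. apply lsum_app. Qed.

Lemma eval_combo_scale {X : Type} (f : X -> A) t l : eval_combo f (scale t l) = zmul t (eval_combo f l).
Proof.
  unfold eval_combo, scale. rewrite lsum_map, <- lsum_zmul.
  apply eq_lsum. intros pn _. apply zmulM.
Qed.

Lemma eval_combo_bind {X Y : Type} (f : Y -> A) (g : X -> list (Y * Z)) l :
  eval_combo f (combo_bind g l) = eval_combo (fun x => eval_combo f (g x)) l.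
Proof.
  unfold combo_bind. unfold eval_combo at 1. rewrite lsum_concat.
  apply eq_lsum. intros pn _. exact (eval_combo_scale f _ _).
Qed.

Lemma eval_combo_coef {X : Type} (f : X -> A) l s : NoDup s -> (forall pn, In pn l -> In (fst pn) s) ->
  eval_combo f l = lsum (fun x => zmul (coef l x) (f x)) s.
Proof.
  intros Hs. induction l as [|[x0 n0] l IH]; intros Hl.
  - symmetry. now apply lsum0.
  - rewrite eval_combo_cons, IH by (intros; apply Hl; now right).
    rewrite (eq_lsum _ (fun x => zmul (coef ((x0, n0) :: l) x) (f x))
                     (fun x => zmul (n0 * delta x0 x) (f x) +' zmul (coef l x) (f x)))
      by (intros x _; now rewrite coef_cons, zmulD).
    rewrite lsumD. f_equal. symmetry.
    rewrite <- (lsum_delta A (fun x => zmul n0 (f x)) s x0 Hs (Hl (x0, n0) (or_introl eq_refl))).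
    apply eq_lsum. intros x _. now rewrite Z.mul_comm, zmulM.
Qed.

Lemma coef_support {X : Type} (l : list (X * Z)) x : coef l x <> 0%Z -> In x (support l).
Proof.
  intros Hx. apply nodup_In. induction l as [|[y n] l IH]; [now contradict Hx|].
  rewrite coef_cons in Hx. cbn [map fst]. unfold delta in Hx.
  destruct excluded_middle_informative as [->|]; [now left|]. right. apply IH. lia.
Qed.

Lemma eval_combo_on_support {X : Type} (f : X -> A) l :
  eval_combo f l = lsum (fun x => zmul (coef l x) (f x)) (support l).
Proof. apply eval_combo_coef; [apply NoDup_support | apply in_support]. Qed.

Lemma eval_combo_normal_form {X : Type} (f : X -> A) l :
  eval_combo f (map (fun x => (x, coef l x)) (support l)) = eval_combo f l.
Proof. rewrite (eval_combo_on_support f l). unfold eval_combo. now rewrite lsum_map. Qed.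

Lemma eq_eval_combo {X : Type} (f g : X -> A) l : (forall x, coef l x <> 0%Z -> f x = g x) ->
  eval_combo f l = eval_combo g l.
Proof.
  intros H. rewrite !eval_combo_on_support. apply eq_lsum. intros x _.
  destruct (Z.eq_dec (coef l x) 0) as [->|Hx]; [reflexivity|]. now rewrite H.
Qed.

Lemma eval_combo_coef0 {X : Type} (f : X -> A) l : (forall x, coef l x = 0%Z) -> eval_combo f l = 0'.
Proof. intros H. rewrite eval_combo_on_support. apply lsum0. intros x _. now rewrite H. Qed.

Lemma eval_combo_exponent {X : Type} (f : X -> A) l (M : Z) : (forall x, (M | coef l x)%Z) ->
  (forall a : A, zmul M a = 0') -> eval_combo f l = 0'.
Proof.
  intros Hl HM. rewrite eval_combo_on_support. apply lsum0. intros x _.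
  destruct (Hl x) as [k ->]. now rewrite zmulM, HM, zmul0r.
Qed.
Lemma eval_combo_single {X : Type} (f : X -> A) x : eval_combo f [(x, 1%Z)] = f x.
Proof. now rewrite eval_combo_cons, zmul1, addr0. Qed.

Lemma eval_combo_update {X : Type} (f : X -> A) x0 y l :
  eval_combo (fun x => if classic_eq_dec x x0 then y else f x) l =
  eval_combo f l +' zmul (coef l x0) (y +' aopp (f x0)).
Proof.
  induction l as [|[x n] l IH].
  - symmetry. apply aadd0.
  - rewrite !eval_combo_cons, IH, coef_cons, zmulD, zmulM.
    assert (Hx : (if classic_eq_dec x x0 then y else f x) = f x +' zmul (delta x x0) (y +' aopp (f x0))).
    { unfold delta, classic_eq_dec. destruct excluded_middle_informative as [->|].
      - now rewrite zmul1, addrCA, addrN, addr0.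
      - symmetry. apply addr0. }
    rewrite Hx, zmulDr. apply addrACA.
Qed.
End Combinations.

Lemma zcombo_cons {X : Type} (f : X -> Z) x n l : zcombo f ((x, n) :: l) = (n * f x + zcombo f l)%Z.
Proof. unfold zcombo, eval_combo. rewrite lsum_cons. cbn [fst snd aadd Zab]. now rewrite zmul_Z. Qed.

Lemma zcombo_app {X : Type} (f : X -> Z) l1 l2 : zcombo f (l1 ++ l2) = (zcombo f l1 + zcombo f l2)%Z.
Proof. apply (eval_combo_app Zab). Qed.

Lemma zcombo_scale {X : Type} (f : X -> Z) t l : zcombo f (scale t l) = (t * zcombo f l)%Z.
Proof. unfold zcombo. rewrite eval_combo_scale. apply zmul_Z. Qed.

Lemma zcomboB {X : Type} (f g : X -> Z) l : zcombo (fun x => f x - g x)%Z l = (zcombo f l - zcombo g l)%Z.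
Proof.
  induction l as [|[x n] l IH]; [reflexivity|]. rewrite !zcombo_cons, IH. ring.
Qed.

Lemma zcombo_divide {X : Type} (M : Z) (f : X -> Z) l : (forall x, (M | f x)%Z) -> (M | zcombo f l)%Z.
Proof.
  intros H. induction l as [|[x n] l IH]; [apply Z.divide_0_r|].
  rewrite zcombo_cons. apply Z.divide_add_r; auto. now apply Z.divide_mul_r.
Qed.

Lemma coef_app {X : Type} (l1 l2 : list (X * Z)) x : coef (l1 ++ l2) x = (coef l1 x + coef l2 x)%Z.
Proof. apply (eval_combo_app Zab). Qed.

Lemma coef_scale {X : Type} t (l : list (X * Z)) x : coef (scale t l) x = (t * coef l x)%Z.
Proof. apply (zcombo_scale (fun y => delta y x)). Qed.

Lemma coef_bind {X Y : Type} (g : X -> list (Y * Z)) l y :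
  coef (combo_bind g l) y = zcombo (fun x => coef (g x) y) l.
Proof. apply (eval_combo_bind Zab). Qed.

Lemma coef_delta {X : Type} (l : list (X * Z)) x : coef l x = zcombo (fun y => delta y x) l.
Proof. reflexivity. Qed.

Lemma zcombo_bind {X Y : Type} (f : Y -> Z) (g : X -> list (Y * Z)) l :
  zcombo f (combo_bind g l) = zcombo (fun x => zcombo f (g x)) l.
Proof. exact (eval_combo_bind Zab f g l). Qed.

(** * Linearization of words and central factors *)

Fixpoint word_combo {G : Group} {J : Type} (u : word G J) : list (J * Z) :=
  match u with
  | [] => []
  | Const _ :: r => word_combo r
  | Var j b :: r => (j, if b then 1%Z else (-1)%Z) :: word_combo r
  end.

(* The image of the word u under the map G * F(J) -> A that kills G and sends x_j to z j. *)
Definition lin {A : AbGroup} {G : Group} {J : Type} (u : word G J) (z : J -> A) : A :=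
  eval_combo z (word_combo u).

Lemma coef_word_combo {G : Group} {J : Type} (u : word G J) j : coef (word_combo u) j = exp_sum u j.
Proof.
  induction u as [|[g|k b] r IH]; [reflexivity|apply IH|].
  cbn [word_combo]. rewrite coef_cons, IH. unfold exp_sum. cbn [fold_right letter_exp].
  unfold delta. destruct excluded_middle_informative, b; lia.
Qed.

Definition central_factor {G : Group} (N S : G -> Prop) : Prop :=
  normal N /\ S gone /\ (forall x y, S x -> S y -> S (gmul x y)) /\ (forall x, S x -> S (ginv x)) /\
  (forall x, N x -> S x) /\ (forall z, S z -> central_mod N z).

Section Quotient.
Variable G : Group.
Local Notation "x * y" := (@gmul G x y).
Local Notation "1" := (@gone G).
Local Notation "x ^-1" := (@ginv G x) (at level 2).
Variables N S : G -> Prop.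
Hypothesis HNS : central_factor N S.
Let HN : normal N := proj1 HNS.
Let HS1 : S 1 := proj1 (proj2 HNS).
Let HSM : forall x y, S x -> S y -> S (x * y) := proj1 (proj2 (proj2 HNS)).
Let HSV : forall x, S x -> S x^-1 := proj1 (proj2 (proj2 (proj2 HNS))).
Let HNsub : forall x, N x -> S x := proj1 (proj2 (proj2 (proj2 (proj2 HNS)))).
Let HSc : forall z, S z -> central_mod N z := proj2 (proj2 (proj2 (proj2 (proj2 HNS)))).

(* Cosets of N are represented by a representative chosen by description, so that S/N is a type. *)
Definition rep (x : G) : G :=
  proj1_sig (constructive_indefinite_description (congr_mod N x) (ex_intro _ x (congr_refl HN x))).

Lemma rep_spec x : congr_mod N x (rep x).
Proof. unfold rep. destruct constructive_indefinite_description. auto. Qed.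

Lemma rep_eq x y : congr_mod N x y -> rep x = rep y.
Proof.
  intros H.
  assert (E : congr_mod N x = congr_mod N y).
  { apply functional_extensionality. intros z. apply propositional_extensionality. split; intros Hz.
    - apply (congr_trans HN) with x; auto. now apply (congr_sym HN).
    - now apply (congr_trans HN) with y. }
  unfold rep. generalize (ex_intro (congr_mod N x) x (congr_refl HN x)).
  generalize (ex_intro (congr_mod N y) y (congr_refl HN y)).
  rewrite E. intros h1 h2. now rewrite (proof_irrelevance _ h1 h2).
Qed.

Lemma rep_S x : S x -> S (rep x).
Proof.
  intros Hx. apply (normal_eq (x * (x^-1 * rep x))); [group|]. apply HSM; auto. apply HNsub, rep_spec.
Qed.

Lemma rep_idem x : rep (rep x) = rep x.
Proof. apply rep_eq, (congr_sym HN), rep_spec. Qed.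

Definition quot := {x : G | S x /\ rep x = x}.

Definition class (x : G) (Hx : S x) : quot := exist _ (rep x) (conj (rep_S x Hx) (rep_idem x)).

Lemma quot_eq (a b : quot) : proj1_sig a = proj1_sig b -> a = b.
Proof. destruct a as [a Ha], b as [b Hb]. simpl. intros ->. f_equal. apply proof_irrelevance. Qed.

Lemma class_eq x y Hx Hy : congr_mod N x y -> class x Hx = class y Hy.
Proof. intros H. apply quot_eq. simpl. now apply rep_eq. Qed.

Lemma class_inj x y Hx Hy : class x Hx = class y Hy -> congr_mod N x y.
Proof.
  intros H. apply (f_equal (@proj1_sig _ _)) in H. simpl in H.
  apply (congr_trans HN) with (rep x). apply rep_spec. rewrite H. apply (congr_sym HN), rep_spec.
Qed.

Lemma quot_S (a : quot) : S (proj1_sig a). Proof. apply (proj2_sig a). Qed.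

Lemma class_val (a : quot) : class (proj1_sig a) (quot_S a) = a.
Proof. apply quot_eq. apply (proj2_sig a). Qed.

Lemma congr_val_class x Hx : congr_mod N (proj1_sig (class x Hx)) x.
Proof. apply (congr_sym HN), rep_spec. Qed.

Definition qadd (a b : quot) : quot := class _ (HSM _ _ (quot_S a) (quot_S b)).
Definition qzero : quot := class 1 HS1.
Definition qopp (a : quot) : quot := class _ (HSV _ (quot_S a)).

Lemma qaddA a b c : qadd a (qadd b c) = qadd (qadd a b) c.
Proof.
  apply class_eq. apply (congr_trans HN) with (proj1_sig a * (proj1_sig b * proj1_sig c)).
  - apply (congr_mull HN), congr_val_class.
  - rewrite <- mulgA_r. apply (congr_mulr HN), (congr_sym HN), congr_val_class.
Qed.

Lemma qaddC a b : qadd a b = qadd b a.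
Proof. apply class_eq. apply (congr_sym HN), HSc, quot_S. Qed.

Lemma qadd0 a : qadd qzero a = a.
Proof.
  rewrite <- (class_val a) at 2. apply class_eq. apply (congr_trans HN) with (1 * proj1_sig a).
  - apply (congr_mulr HN), congr_val_class.
  - apply (congr_eq HN). group.
Qed.

Lemma qaddN a : qadd (qopp a) a = qzero.
Proof.
  apply class_eq. apply (congr_trans HN) with ((proj1_sig a)^-1 * proj1_sig a).
  - apply (congr_mulr HN), congr_val_class.
  - apply (congr_eq HN). group.
Qed.

Definition quotient : AbGroup :=
  {| acar := quot; aadd := qadd; azero := qzero; aopp := qopp;
     aaddA := qaddA; aaddC := qaddC; aadd0 := qadd0; aaddN := qaddN |}.

(* The projection S -> S/N, extended by 0 outside S. *)
Definition proj (x : G) : quotient :=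
  match excluded_middle_informative (S x) with left H => class x H | right _ => qzero end.

Lemma proj_class x (H : S x) : proj x = class x H.
Proof.
  unfold proj. destruct excluded_middle_informative; [|contradiction]. apply class_eq, (congr_refl HN).
Qed.

Lemma projM x y : S x -> S y -> proj (x * y) = aadd (proj x) (proj y).
Proof.
  intros Hx Hy. rewrite (proj_class x Hx), (proj_class y Hy), (proj_class _ (HSM _ _ Hx Hy)).
  apply class_eq. apply (congr_mul HN); apply (congr_sym HN), congr_val_class.
Qed.

Lemma proj_unit : proj 1 = azero. Proof. apply (proj_class _ HS1). Qed.

Lemma projV x : S x -> proj x^-1 = aopp (proj x).
Proof.
  intros Hx. apply (addrI quotient (proj x)). rewrite addrN, <- projM, mulgV; auto. apply proj_unit.
Qed.

Lemma proj_eq0 x : S x -> (proj x = azero <-> N x).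
Proof.
  intros Hx. rewrite (proj_class x Hx). split; intros H.
  - apply class_inj in H. unfold congr_mod in H. apply normalV in H; auto. revert H. apply normal_eq. group.
  - apply class_eq. unfold congr_mod. group_simpl. now apply (normalV HN).
Qed.

Lemma proj_surj (a : quotient) : exists x, S x /\ proj x = a.
Proof. exists (proj1_sig a). split. apply quot_S. rewrite (proj_class _ (quot_S a)). apply class_val. Qed.

Lemma projX x n : S x -> natmul n (proj x) = proj (gpow x n).
Proof.
  intros Hx. assert (HX : forall k, S (gpow x k)) by (induction k; simpl; auto).
  induction n; simpl. symmetry; apply proj_unit. now rewrite projM, IHn.
Qed.

Fixpoint eval_vars {J : Type} (z : J -> G) (u : word G J) : G :=
  match u with
  | [] => 1
  | Const _ :: r => eval_vars z r
  | (Var _ _ as l) :: r => eval_letter z l * eval_vars z r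
  end.

Lemma eval_vars_S {J : Type} (z : J -> G) u : (forall j, S (z j)) -> S (eval_vars z u).
Proof. intros Hz. induction u as [|[g|j []] r IH]; simpl; auto. Qed.

Lemma proj_eval_vars {J : Type} (z : J -> G) u : (forall j, S (z j)) ->
  proj (eval_vars z u) = lin u (fun j => proj (z j)).
Proof.
  intros Hz. unfold lin. induction u as [|[g|j []] r IH]; cbn [eval_vars word_combo eval_letter].
  - apply proj_unit.
  - exact IH.
  - rewrite eval_combo_cons, zmul1, projM, IH; auto using eval_vars_S.
  - rewrite eval_combo_cons, zmulN1, projM, projV, IH; auto using eval_vars_S.
Qed.

Lemma eval_word_shift {J : Type} (a z : J -> G) u : (forall j, S (z j)) ->
  congr_mod N (eval_word (fun j => a j * z j) u) (eval_word a u * eval_vars z u).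
Proof.
  intros Hz. unfold eval_word. induction u as [|[g|j []] r IH]; cbn [fold_right eval_vars eval_letter].
  - apply (congr_eq HN). group.
  - rewrite mulgA_r. now apply (congr_mull HN).
  - apply (congr_trans HN) with ((a j * z j) * (eval_word a r * eval_vars z r)).
    + now apply (congr_mull HN).
    + rewrite !mulgA_r. apply (congr_mull HN). rewrite <- !mulgA_r. apply (congr_mulr HN).
      apply (congr_sym HN), HSc; auto.
  - apply (congr_trans HN) with ((a j * z j)^-1 * (eval_word a r * eval_vars z r)).
    + now apply (congr_mull HN).
    + apply (congr_trans HN) with ((z j)^-1 * (((a j)^-1 * eval_word a r) * eval_vars z r)).
      { apply (congr_eq HN). group. }
      rewrite gmulA. apply (congr_trans HN) with ((((a j)^-1 * eval_word a r) * (z j)^-1) * eval_vars z r).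
      * apply (congr_mulr HN), (congr_sym HN), HSc; auto.
      * apply (congr_eq HN). group.
Qed.

(* The correction factors z j are a solution of the linear system with right-hand sides the
   images of the w_i(a)^-1 in S/N. *)
Lemma lift_solution {I J : Type} (w : I -> word G J) (a : J -> G) :
  (forall i, S (eval_word a (w i))) ->
  (forall c : I -> quotient, exists z : J -> quotient, forall i, lin (w i) z = c i) ->
  exists a' : J -> G, forall i, N (eval_word a' (w i)).
Proof.
  intros Ha Hsolv. destruct (Hsolv (fun i => proj (eval_word a (w i))^-1)) as [z Hz].
  set (zs := fun j => proj1_sig (z j)).
  assert (Hzs : forall j, S (zs j)) by (intros; apply quot_S).
  exists (fun j => a j * zs j). intros i.
  apply (congr_normal HN) with (eval_word a (w i) * eval_vars zs (w i)).
  { now apply eval_word_shift. }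
  assert (Hv : S (eval_vars zs (w i))) by now apply eval_vars_S.
  apply proj_eq0; auto.
  assert (E : (fun j => proj (zs j)) = z).
  { apply functional_extensionality. intros j. unfold zs.
    rewrite (proj_class _ (quot_S (z j))). apply class_val. }
  rewrite projM, proj_eval_vars, E, Hz, projV; auto. apply addrN.
Qed.
Lemma quotient_exponent n : (forall x, S x -> N (gpow x n)) -> forall a : quotient, natmul n a = azero.
Proof.
  intros Hn a. destruct (proj_surj a) as [x [Hx <-]]. rewrite (projX x n Hx).
  apply proj_eq0; auto.
Qed.

Lemma quotient_divisible : (forall x d, S x -> 0 < d -> exists y, S y /\ gpow y d = x) ->
  forall (a : quotient) d, 0 < d -> exists b, natmul d b = a.
Proof.
  intros Hdiv a d Hd. destruct (proj_surj a) as [x [Hx <-]].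
  destruct (Hdiv x d Hx Hd) as [y [Hy <-]]. exists (proj y). now apply projX.
Qed.
End Quotient.

(** * Linear systems over abelian groups *)

Definition chain {T : Type} (F : (T -> Prop) -> Prop) : Prop :=
  forall X Y, F X -> F Y -> (forall t, X t -> Y t) \/ (forall t, Y t -> X t).

Definition chain_union {T : Type} (F : (T -> Prop) -> Prop) (t : T) : Prop := exists2 X, F X & X t.

Lemma zorn {T : Type} (P : (T -> Prop) -> Prop) :
  (forall F, (forall X, F X -> P X) -> chain F -> P (chain_union F)) ->
  exists M, P M /\ forall X, (forall t, M t -> X t) -> P X -> forall t, X t -> M t.
Proof.
  intros H. destruct (@classical_sets.Zorn_bigcup T P) as [M [HM Hmax]].
  - intros F HF Hc. exact (H F HF Hc).
  - exists M. split; [exact HM|]. intros X HMX HX t Ht. apply NNPP. intros Hnt.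
    apply (Hmax X); [split; [exact HMX | intros HXM; exact (Hnt (HXM t Ht))] | exact HX].
Qed.

Lemma chain_union_finite {T : Type} (F : (T -> Prop) -> Prop) (Q : T -> Prop) (ts : list T) :
  chain F -> (forall t, Q t -> In t ts) -> (forall t, Q t -> chain_union F t) ->
  (forall t, ~ Q t) \/ exists2 X, F X & forall t, Q t -> X t.
Proof.
  intros Hc Hts HQ.
  enough (H : (forall t, In t ts -> ~ Q t) \/ exists2 X, F X & forall t, In t ts -> Q t -> X t).
  { destruct H as [H|[X HX H]]; [left; intros t Qt; exact (H t (Hts t Qt) Qt) | right; exists X; auto]. }
  clear Hts. induction ts as [|t ts IH]; [left; intros t []|].
  destruct (classic (Q t)) as [Qt|Qt].
  - right. destruct (HQ t Qt) as [X HX Xt]. destruct IH as [H|[Y HY HYts]].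
    + exists X; auto. intros t' [<-|Ht'] Q'; auto. now destruct (H t' Ht').
    + destruct (Hc X Y HX HY) as [HXY|HYX]; [exists Y | exists X]; auto; intros t' [<-|Ht'] Q'; auto.
  - destruct IH as [H|[Y HY HYts]]; [left | right; exists Y]; auto.
    + intros t' [<-|Ht']; auto.
    + intros t' [<-|Ht'] Q'; [contradiction | auto].
Qed.

Definition combo_on {X : Type} (P : X -> Prop) (l : list (X * Z)) : Prop :=
  forall x, coef l x <> 0%Z -> P x.

Definition independent_mod {X J : Type} (M : Z) (R : X -> J -> Z) (P : X -> Prop) : Prop :=
  forall l, combo_on P l -> (forall j, (M | zcombo (fun x => R x j) l)%Z) -> forall x, (M | coef l x)%Z.

Lemma combo_on_app {X : Type} (P : X -> Prop) l1 l2 : combo_on P l1 -> combo_on P l2 -> combo_on P (l1 ++ l2).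
Proof.
  intros H1 H2 x. rewrite coef_app. intros Hx.
  destruct (Z.eq_dec (coef l1 x) 0); [apply H2 | apply H1]; lia.
Qed.

Lemma combo_on_scale {X : Type} (P : X -> Prop) t l : combo_on P l -> combo_on P (scale t l).
Proof. intros H x. rewrite coef_scale. intros Hx. apply H. intros E. apply Hx. rewrite E. ring. Qed.

Lemma combo_on_single {X : Type} (P : X -> Prop) x n : P x -> combo_on P [(x, n)].
Proof.
  intros Hx y. rewrite coef_cons. unfold delta. destruct excluded_middle_informative as [<-|]; auto.
  intros H. exfalso. apply H. now rewrite Z.mul_0_r.
Qed.

Lemma zcombo_eq0 {X : Type} (f : X -> Z) l : (forall x, f x = 0%Z) -> zcombo f l = 0%Z.
Proof. intros H. induction l as [|[x n] l IH]; [reflexivity|]. rewrite zcombo_cons, H, IH. ring. Qed.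

Lemma combo_on_bind {X Y : Type} (P : Y -> Prop) (g : X -> list (Y * Z)) l :
  (forall x, combo_on P (g x)) -> combo_on P (combo_bind g l).
Proof.
  intros H y. rewrite coef_bind. intros Hy. apply NNPP. intros Py. apply Hy, zcombo_eq0.
  intros x. apply NNPP. intros Hx. exact (Py (H x y Hx)).
Qed.

Lemma combo_divide {X : Type} (M : Z) (l : list (X * Z)) : M <> 0%Z -> (forall x, (M | coef l x)%Z) ->
  exists l', forall (A : AbGroup) (f : X -> A), eval_combo f l = zmul M (eval_combo f l').
Proof.
  intros HM Hdiv. exists (map (fun x => (x, (coef l x / M)%Z)) (support l)). intros A f.
  rewrite <- eval_combo_scale, <- (eval_combo_normal_form A f l). unfold scale. rewrite map_map.
  f_equal. apply map_ext. intros x. cbn [fst snd].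
  destruct (Hdiv x) as [k Hk]. rewrite Hk, Z.div_mul by exact HM. f_equal. ring.
Qed.

Lemma zcombo_divide_factor {X : Type} (M : Z) (l l' : list (X * Z)) :
  (forall (A : AbGroup) (f : X -> A), eval_combo f l = zmul M (eval_combo f l')) ->
  forall f, zcombo f l = (M * zcombo f l')%Z.
Proof. intros H f. unfold zcombo. rewrite H. apply zmul_Z. Qed.

Lemma independent_mod_pow {X J : Type} (p : nat) (R : X -> J -> Z) P : 0 < p ->
  independent_mod (Z.of_nat p) R P -> forall a, independent_mod (Z.of_nat (Nat.pow p a)) R P.
Proof.
  intros Hp Hind a. induction a as [|a IH]; intros l Hl Hrows x; [apply Z.divide_1_l|].
  change (Nat.pow p (S a)) with (p * Nat.pow p a) in *. rewrite Nat2Z.inj_mul in *.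
  assert (Hdiv : forall y, (Z.of_nat p | coef l y)%Z).
  { apply Hind; auto. intros j. eapply Z.divide_trans; [|apply Hrows]. apply Z.divide_mul_l, Z.divide_refl. }
  destruct (combo_divide (Z.of_nat p) l ltac:(lia) Hdiv) as [l' Hl'].
  pose proof (zcombo_divide_factor _ _ _ Hl') as Hz.
  rewrite coef_delta, Hz, <- coef_delta. apply Z.mul_divide_mono_l, IH.
  - intros y Hy. apply Hl. rewrite coef_delta, Hz, <- coef_delta. lia.
  - intros j. apply (Z.mul_divide_cancel_l _ _ (Z.of_nat p)); [lia|]. rewrite <- Hz. apply Hrows.
Qed.

Lemma zcombo_on_support {X : Type} (f : X -> Z) l :
  zcombo f l = fold_right (fun x acc => (coef l x * f x + acc)%Z) 0%Z (support l).
Proof.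
  unfold zcombo. rewrite (eval_combo_on_support Zab). induction (support l) as [|x s IH]; [reflexivity|].
  rewrite lsum_cons, IH. cbn [fold_right aadd Zab]. now rewrite zmul_Z.
Qed.

Lemma divisible_by_all_powers (p : nat) (n : Z) : 1 < p ->
  (forall a, (Z.of_nat (Nat.pow p a) | n)%Z) -> n = 0%Z.
Proof.
  intros Hp Hn. destruct (Z.eq_dec n 0) as [|Hn0]; [assumption|exfalso].
  set (a := Z.to_nat (Z.abs n)).
  pose proof (Nat.pow_gt_lin_r p a Hp) as Hlt.
  pose proof (Z.divide_pos_le _ (Z.abs n) ltac:(lia) (proj2 (Z.divide_abs_r _ _) (Hn a))).
  unfold a in *. lia.
Qed.

Lemma subgroup_Z_cyclic (D : Z -> Prop) : D 0%Z -> (forall x y, D x -> D y -> D (x - y)%Z) ->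
  exists d, (0 <= d)%Z /\ D d /\ forall m, D m -> (d | m)%Z.
Proof.
  intros D0 DB.
  assert (DN : forall x, D x -> D (- x)%Z) by (intros x Hx; rewrite <- Z.sub_0_l; auto).
  assert (DM : forall x k, D x -> D (k * x)%Z).
  { intros x k Hx. destruct (Z_as_sub_nat k) as [a [b ->]]. rewrite Z.mul_sub_distr_r.
    assert (Hn : forall n : nat, D (Z.of_nat n * x)%Z).
    { induction n as [|n IH]; [exact D0|]. rewrite Nat2Z.inj_succ, Z.mul_succ_l.
      replace (Z.of_nat n * x + x)%Z with (Z.of_nat n * x - - x)%Z by ring. auto. }
    auto. }
  destruct (classic (exists m, D m /\ m <> 0%Z)) as [[m [Dm Hm]]|Hnone].
  2:{ exists 0%Z. repeat split; [lia | exact D0 |]. intros m Dm. destruct (Z.eq_dec m 0) as [->|Hm].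
      - apply Z.divide_refl.
      - exfalso. eauto. }
  destruct (least_nat (fun n => 0 < n /\ D (Z.of_nat n))) as [d [[Hd Dd] Hleast]].
  { exists (Z.to_nat (Z.abs m)). split; [lia|]. destruct (Z.abs_spec m) as [[Hm0 ->]|[Hm0 ->]].
    - now rewrite Z2Nat.id by lia.
    - rewrite Z2Nat.id by lia. auto. }
  exists (Z.of_nat d). repeat split; [lia | exact Dd |]. intros n Dn.
  apply Z.mod_divide; [lia|]. pose proof (Z.mod_pos_bound n (Z.of_nat d) ltac:(lia)).
  destruct (Z.eq_dec (n mod Z.of_nat d) 0%Z) as [|Hr]; [assumption|exfalso].
  assert (Dr : D (n mod Z.of_nat d)%Z).
  { rewrite Z.mod_eq by lia. apply DB; auto. rewrite Z.mul_comm. auto. }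
  specialize (Hleast (Z.to_nat (n mod Z.of_nat d)%Z)). rewrite Z2Nat.id in Hleast by lia.
  assert (Hpos : 0 < Z.to_nat (n mod Z.of_nat d)%Z) by lia.
  specialize (Hleast (conj Hpos Dr)). lia.
Qed.

Definition combo_left {X Y : Type} (l : list ((X + Y) * Z)) : list (X * Z) :=
  flat_map (fun pn => match fst pn with inl x => [(x, snd pn)] | inr _ => [] end) l.

Definition combo_right {X Y : Type} (l : list ((X + Y) * Z)) : list (Y * Z) :=
  flat_map (fun pn => match fst pn with inl _ => [] | inr y => [(y, snd pn)] end) l.

Lemma eval_combo_sum {A : AbGroup} {X Y : Type} (f : X + Y -> A) l :
  eval_combo f l =
  aadd (eval_combo (fun x => f (inl x)) (combo_left l)) (eval_combo (fun y => f (inr y)) (combo_right l)).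
Proof.
  induction l as [|[[x|y] n] l IH]; [symmetry; apply aadd0| |];
    unfold combo_left, combo_right in *; cbn [flat_map fst snd app]; rewrite !eval_combo_cons, IH.
  - apply aaddA.
  - apply addrCA.
Qed.

Lemma coef_combo_left {X Y : Type} (l : list ((X + Y) * Z)) x : coef (combo_left l) x = coef l (inl x).
Proof.
  induction l as [|[[x'|y] n] l IH]; [reflexivity| |];
    unfold combo_left in *; cbn [flat_map fst snd app]; rewrite ?coef_cons, IH; unfold delta;
    repeat destruct excluded_middle_informative; congruence || ring.
Qed.

Lemma coef_combo_right {X Y : Type} (l : list ((X + Y) * Z)) y : coef (combo_right l) y = coef l (inr y).
Proof.
  induction l as [|[[x|y'] n] l IH]; [reflexivity| |];
    unfold combo_right in *; cbn [flat_map fst snd app]; rewrite ?coef_cons, IH; unfold delta;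
    repeat destruct excluded_middle_informative; congruence || ring.
Qed.

Lemma zcombo_sum {X Y : Type} (f : X + Y -> Z) l :
  zcombo f l = (zcombo (fun x => f (inl x)) (combo_left l) + zcombo (fun y => f (inr y)) (combo_right l))%Z.
Proof. exact (eval_combo_sum (A := Zab) f l). Qed.

Section LinearSystems.
Variable G : Group.
Variables I J : Type.
Variable w : I -> word G J.
Variable p : nat.
Hypothesis Hp : prime (Z.of_nat p).
Hypothesis Hns : p_nonsingular p w.
Local Open Scope Z_scope.

Lemma rows_independent : independent_mod (Z.of_nat p) (fun i j => exp_sum (w i) j) (fun _ => True).
Proof.
  intros l _ Hrows i. destruct (classic (In i (support l))) as [Hi|Hi].
  - apply (Hns (support l) (coef l) (NoDup_support l)); auto.
    intros j. rewrite <- zcombo_on_support. apply Hrows.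
  - replace (coef l i) with 0 by (apply NNPP; intros H; apply Hi, coef_support; auto).
    apply Z.divide_0_r.
Qed.

Lemma rows_Z_independent l : (forall j, zcombo (fun i => exp_sum (w i) j) l = 0) -> forall i, coef l i = 0.
Proof.
  intros Hl i. apply (divisible_by_all_powers p); [now apply prime_gt1|]. intros a.
  apply (independent_mod_pow p _ _ (prime_pos p Hp) rows_independent a).
  - intros x _. trivial.
  - intros j. rewrite Hl. apply Z.divide_0_r.
Qed.

Definition form (l : list (I * Z)) : list (J * Z) := combo_bind (fun i => word_combo (w i)) l.

Lemma coef_form l j : coef (form l) j = zcombo (fun i => exp_sum (w i) j) l.
Proof.
  unfold form. rewrite coef_bind. f_equal. apply functional_extensionality. intros i. apply coef_word_combo.
Qed.

Lemma eval_combo_form {A : AbGroup} (z : J -> A) l :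
  eval_combo z (form l) = eval_combo (fun i => lin (w i) z) l.
Proof. apply eval_combo_bind. Qed.

Lemma form_consistent {A : AbGroup} (z : J -> A) (c : I -> A) l : (forall j, coef (form l) j = 0) ->
  eval_combo z (form l) = eval_combo c l.
Proof.
  intros Hl. rewrite !eval_combo_coef0; auto. apply rows_Z_independent. intros j. now rewrite <- coef_form.
Qed.

Lemma coef_form_app l1 l2 j : coef (form (l1 ++ l2)) j = coef (form l1) j + coef (form l2) j.
Proof. rewrite !coef_form. apply zcombo_app. Qed.

Lemma coef_form_scale t l j : coef (form (scale t l)) j = t * coef (form l) j.
Proof. rewrite !coef_form. apply zcombo_scale. Qed.

Section Divisible.
Variable A : AbGroup.
Hypothesis Hdiv : forall (a : A) (d : nat), (0 < d)%nat -> exists b, natmul d b = a.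
Variable c : I -> A.

Definition functional (X : J * A -> Prop) := forall j y1 y2, X (j, y1) -> X (j, y2) -> y1 = y2.

(* X is the graph of a partial assignment that satisfies every consequence of the system
   whose variables all lie in its domain. *)
Definition consistent (X : J * A -> Prop) :=
  forall l z, (forall j, coef (form l) j <> 0 -> X (j, z j)) -> eval_combo z (form l) = eval_combo c l.

Definition partial_solution (X : J * A -> Prop) := functional X /\ consistent X.

Lemma partial_solution_chain F : (forall X, F X -> partial_solution X) -> chain F ->
  partial_solution (chain_union F).
Proof.
  intros HF Hc. split.
  - intros j y1 y2 [X1 H1 HX1] [X2 H2 HX2].
    destruct (Hc X1 X2 H1 H2) as [H|H]; [apply (proj1 (HF X2 H2) j) | apply (proj1 (HF X1 H1) j)]; auto.
  - intros l z Hlz.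
    destruct (chain_union_finite F (fun t => coef (form l) (fst t) <> 0 /\ snd t = z (fst t))
                (map (fun j => (j, z j)) (support (form l))) Hc) as [H0|[X HX HXl]].
    + intros [j y] [Hj Hy]. cbn in *. subst. apply in_map_iff.
      exists j. split; [reflexivity | now apply coef_support].
    + intros [j y] [Hj Hy]. cbn in *. subst. apply Hlz, Hj.
    + apply form_consistent. intros j. apply NNPP. intros Hj. apply (H0 (j, z j)). auto.
    + apply (proj2 (HF X HX)). intros j Hj. apply (HXl (j, z j)). auto.
Qed.

Section Extension.
Variable A0 : J * A -> Prop.
Hypothesis HA0 : partial_solution A0.
Variable j0 : J.
Hypothesis Hj0 : forall y, ~ A0 (j0, y).

Definition base (j : J) : A :=
  match excluded_middle_informative (exists y, A0 (j, y)) with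
  | left H => proj1_sig (constructive_indefinite_description _ H)
  | right _ => azero
  end.

Lemma base_spec j y : A0 (j, y) -> base j = y.
Proof.
  intros Hy. unfold base. destruct excluded_middle_informative as [H|H]; [|exfalso; apply H; now exists y].
  destruct constructive_indefinite_description as [y' Hy']. apply (proj1 HA0 j); auto.
Qed.

Lemma base_j0 : base j0 = azero.
Proof.
  unfold base. destruct excluded_middle_informative as [H|H]; [|reflexivity].
  exfalso. destruct H as [y Hy]. exact (Hj0 y Hy).
Qed.

Definition supported l := forall j, j <> j0 -> coef (form l) j <> 0 -> A0 (j, base j).

Definition defect l : A := aadd (eval_combo c l) (aopp (eval_combo base (form l))).

Lemma supported_app l1 l2 : supported l1 -> supported l2 -> supported (l1 ++ l2).
Proof.
  intros H1 H2 j Hj. rewrite coef_form_app. intros Hne.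
  destruct (Z.eq_dec (coef (form l1) j) 0); [apply H2 | apply H1]; auto. lia.
Qed.

Lemma supported_scale t l : supported l -> supported (scale t l).
Proof. intros H j Hj. rewrite coef_form_scale. intros Hne. apply H; auto. intros E. apply Hne. lia. Qed.

Lemma defect_app l1 l2 : defect (l1 ++ l2) = aadd (defect l1) (defect l2).
Proof.
  unfold defect, form, combo_bind. rewrite map_app, concat_app, !eval_combo_app, opprD. apply addrACA.
Qed.

Lemma defect_scale t l : defect (scale t l) = zmul t (defect l).
Proof.
  unfold defect. now rewrite zmulDr, zmulNr, !eval_combo_form, !eval_combo_scale.
Qed.

Lemma defect_eq0 l : supported l -> coef (form l) j0 = 0 -> defect l = azero.
Proof.
  intros Hl Hl0. unfold defect. rewrite (proj2 HA0 l base), addrN; [reflexivity|].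
  intros j Hj. destruct (classic (j = j0)) as [->|Hne]; [contradiction | auto].
Qed.

(* The j0-coefficients of supported combinations form a subgroup dZ of Z, on which the defect
   is additive; divisibility of A provides the value y0 at j0 with d y0 = defect. *)
Lemma defect_linear : exists y0, forall l, supported l -> zmul (coef (form l) j0) y0 = defect l.
Proof.
  destruct (subgroup_Z_cyclic (fun m => exists l, supported l /\ coef (form l) j0 = m))
    as [d [Hd [[l0 [Hl0 Hd0]] Hdiv_d]]].
  - exists []. split; [intros j _ H; now contradict H | reflexivity].
  - intros x y [l1 [H1 <-]] [l2 [H2 <-]]. exists (l1 ++ scale (-1) l2). split.
    + apply supported_app, supported_scale; auto.
    + rewrite coef_form_app, coef_form_scale. ring.
  - assert (Hy0 : exists y0, zmul d y0 = defect l0).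
    { destruct (Z.eq_dec d 0) as [->|Hd0'].
      - exists azero. symmetry. apply defect_eq0; auto.
      - destruct (Hdiv (defect l0) (Z.to_nat d)) as [y0 Hy0]; [lia|].
        exists y0. now rewrite <- (Z2Nat.id d), zmul_nat by lia. }
    destruct Hy0 as [y0 Hy0]. exists y0. intros l Hl.
    destruct (Hdiv_d (coef (form l) j0)) as [k Hk]; [now exists l|].
    assert (Hrest : defect (l ++ scale (- k) l0) = azero).
    { apply defect_eq0. apply supported_app, supported_scale; auto.
      rewrite coef_form_app, coef_form_scale, Hd0, Hk. ring. }
    rewrite defect_app, defect_scale, zmulN in Hrest. apply subr0_eq in Hrest.
    now rewrite Hrest, Hk, zmulM, Hy0.
Qed.

Lemma extend : exists y0, partial_solution (fun t => A0 t \/ t = (j0, y0)).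
Proof.
  destruct defect_linear as [y0 Hy0]. exists y0. split.
  - intros j y1 y2 [H1|H1] [H2|H2].
    + exact (proj1 HA0 j y1 y2 H1 H2).
    + injection H2 as -> ->. now destruct (Hj0 y1).
    + injection H1 as -> ->. now destruct (Hj0 y2).
    + injection H1 as -> ->. now injection H2.
  - intros l z Hlz.
    assert (Hz : forall j, coef (form l) j <> 0 -> z j = if classic_eq_dec j j0 then y0 else base j).
    { intros j Hj. destruct (Hlz j Hj) as [H|H]; destruct classic_eq_dec as [->|Hne].
      - exfalso. exact (Hj0 _ H).
      - symmetry. now apply base_spec.
      - now injection H.
      - injection H. contradiction. }
    assert (Hl : supported l).
    { intros j Hne Hj. destruct (Hlz j Hj) as [H|H]; [|injection H; contradiction].
      now rewrite (base_spec j (z j) H). }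
    rewrite (eq_eval_combo _ _ _ _ Hz), eval_combo_update, base_j0, oppr0, addr0, Hy0 by auto.
    unfold defect. now rewrite addrCA, addrN, addr0.
Qed.
End Extension.

Theorem solvable_divisible : exists z : J -> A, forall i, lin (w i) z = c i.
Proof.
  destruct (zorn partial_solution partial_solution_chain) as [M [HM Hmax]].
  assert (Htot : forall j, exists y, M (j, y)).
  { intros j0. apply NNPP. intros Hn.
    assert (Hj0 : forall y, ~ M (j0, y)) by (intros y Hy; apply Hn; eauto).
    destruct (extend M HM j0 Hj0) as [y0 Hy0].
    apply (Hj0 y0), (Hmax _ (fun t Ht => or_introl Ht) Hy0). now right. }
  destruct (choice _ Htot) as [z Hz]. exists z. intros i.
  rewrite <- (eval_combo_single _ c i), <- (eval_combo_single _ (fun i => lin (w i) z) i).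
  rewrite <- eval_combo_form. apply (proj2 HM). intros j _. apply Hz.
Qed.
End Divisible.

(* The rows of the equations together with the unit rows e_k of the variables. *)
Definition row_combo (t : I + J) : list (J * Z) :=
  match t with inl i => word_combo (w i) | inr k => [(k, 1)] end.

Definition row (t : I + J) (j : J) : Z := coef (row_combo t) j.

Definition allowed (K : J -> Prop) (t : I + J) : Prop := match t with inl _ => True | inr k => K k end.

(* The equations stay independent modulo p after adjoining the unit rows e_k, k in K. *)
Definition extends_rows (K : J -> Prop) := independent_mod (Z.of_nat p) row (allowed K).

Lemma zcombo_row l j : zcombo (fun t => row t j) l = coef (combo_bind row_combo l) j.
Proof. now rewrite coef_bind. Qed.

Lemma row_unit k j : row (inr k) j = delta k j.
Proof. unfold row. cbn [row_combo]. rewrite coef_cons. change (coef [] j) with 0. ring. Qed.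

Lemma extends_rows_empty : extends_rows (fun _ => False).
Proof.
  intros l Hl Hrows [i|k].
  - rewrite <- coef_combo_left. apply rows_independent; [intros x _; trivial|]. intros j.
    replace (zcombo (fun i => exp_sum (w i) j) (combo_left l)) with (zcombo (fun t => row t j) l);
      [apply Hrows|].
    rewrite zcombo_sum.
    replace (fun k => row (inr k) j) with (fun k => delta k j)
      by (apply functional_extensionality; intros k; symmetry; apply row_unit).
    replace (fun i => row (inl i) j) with (fun i => exp_sum (w i) j)
      by (apply functional_extensionality; intros i'; symmetry; apply coef_word_combo).
    rewrite <- coef_delta, coef_combo_right.
    replace (coef l (inr j)) with 0 by (apply NNPP; intros H; exact (Hl _ (not_eq_sym H))). ring.
  - replace (coef l (inr k)) with 0 by (apply NNPP; intros H; exact (Hl _ (not_eq_sym H))).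
    apply Z.divide_0_r.
Qed.

Lemma extends_rows_chain F : (forall K, F K -> extends_rows K) -> chain F -> extends_rows (chain_union F).
Proof.
  intros HF Hc l Hl Hrows.
  destruct (chain_union_finite F (fun k => coef l (inr k) <> 0) (support (combo_right l)) Hc)
    as [H0|[K HK HKl]].
  - intros k Hk. apply coef_support. now rewrite coef_combo_right.
  - intros k Hk. exact (Hl (inr k) Hk).
  - apply (extends_rows_empty l); [intros [i|k] Hk; [constructor | exact (H0 k Hk)] | exact Hrows].
  - apply (HF K HK l); [intros [i|k] Hk; [constructor | exact (HKl k Hk)] | exact Hrows].
Qed.

Section MaximalExtension.
Variable K : J -> Prop.
Hypothesis HK : extends_rows K.
Hypothesis Hmax : forall K', (forall k, K k -> K' k) -> extends_rows K' -> forall k, K' k -> K k.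

(* Otherwise j could be adjoined to K: in a relation modulo p, the coefficient a of e_j is either
   divisible by p, leaving a relation among the rows of K, or invertible mod p, expressing e_j. *)
Lemma unit_row_mod_p j : exists l, combo_on (allowed K) l /\
  forall j3, (Z.of_nat p | delta j j3 - zcombo (fun t => row t j3) l).
Proof.
  destruct (classic (K j)) as [Hj|Hj].
  { exists [(inr j, 1)]. split; [now apply combo_on_single|]. intros j3.
    rewrite zcombo_cons, row_unit. change (zcombo (fun t => row t j3) []) with 0.
    replace (delta j j3 - (1 * delta j j3 + 0)) with 0 by ring. apply Z.divide_0_r. }
  apply NNPP. intros Hno. apply Hj, (Hmax (fun k => K k \/ k = j)); [auto | | now right].
  intros l Hl Hrows t. set (a := coef l (inr j)). set (l' := l ++ [(inr j, - a)]).
  assert (Hcoef : forall t, coef l' t = coef l t - a * delta (inr j) t).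
  { intros t'. unfold l'. rewrite coef_app, coef_cons. change (coef [] t') with 0. ring. }
  assert (Hrows' : forall j3,
            zcombo (fun t => row t j3) l' = zcombo (fun t => row t j3) l - a * delta j j3).
  { intros j3. unfold l'. rewrite zcombo_app, zcombo_cons, row_unit.
    change (zcombo (fun t => row t j3) []) with 0. ring. }
  assert (Hl' : combo_on (allowed K) l').
  { intros [i|k] Hk; [constructor|]. rewrite Hcoef in Hk. unfold delta in Hk.
    destruct excluded_middle_informative as [E|E].
    - injection E as <-. unfold a in Hk. lia.
    - destruct (Hl (inr k)) as [Hk'|<-]; [lia | exact Hk' | now contradict E]. }
  destruct (classic (Z.of_nat p | a)) as [Ha|Ha].
  - replace (coef l t) with (coef l' t + a * delta (inr j) t) by (rewrite Hcoef; ring).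
    apply Z.divide_add_r; [|now apply Z.divide_mul_l]. apply HK; auto. intros j3. rewrite Hrows'.
    apply Z.divide_sub_r; [apply Hrows | now apply Z.divide_mul_l].
  - exfalso. apply Hno. destruct (rel_prime_bezout _ _ (prime_rel_prime _ Hp _ Ha)) as [u g Hb].
    exists (scale (- g) l'). split; [now apply combo_on_scale|]. intros j3.
    rewrite zcombo_scale, Hrows'.
    assert (Hd := f_equal (fun x => x * delta j j3) Hb). cbn beta in Hd.
    replace (delta j j3 - - g * (zcombo (fun t => row t j3) l - a * delta j j3))
      with (Z.of_nat p * (u * delta j j3) + g * zcombo (fun t => row t j3) l) by nia.
    apply Z.divide_add_r; [apply Z.divide_mul_l, Z.divide_refl | apply Z.divide_mul_r, Hrows].
Qed.

(* Hensel-type lifting: substituting the mod-p expressions of the e_k into the error term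
   improves a congruence modulo p^a to one modulo p^(a+1). *)
Lemma unit_row_mod_pow a j : exists l, combo_on (allowed K) l /\
  forall j3, (Z.of_nat (Nat.pow p a) | delta j j3 - zcombo (fun t => row t j3) l).
Proof.
  revert j. induction a as [|a IH]; intros j.
  { exists []. split; [intros x Hx; now contradict Hx | intros; apply Z.divide_1_l]. }
  destruct (choice _ unit_row_mod_p) as [sp Hsp].
  destruct (IH j) as [l [Hl Hrows]].
  set (q := Z.of_nat (Nat.pow p a)).
  set (err := [(j, 1)] ++ scale (-1) (combo_bind row_combo l)).
  assert (Herr : forall j3, coef err j3 = delta j j3 - zcombo (fun t => row t j3) l).
  { intros j3. unfold err. rewrite coef_app, coef_cons, coef_scale, zcombo_row.
    change (coef [] j3) with 0. ring. }
  destruct (combo_divide q err) as [r Hr].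
  { pose proof (pow_prime_pos p Hp a). unfold q. lia. }
  { intros j3. rewrite Herr. apply Hrows. }
  pose proof (zcombo_divide_factor _ _ _ Hr) as Hrz.
  exists (l ++ scale q (combo_bind sp r)). split.
  { apply combo_on_app, combo_on_scale, combo_on_bind; auto. intros k. apply Hsp. }
  intros j3. rewrite zcombo_app, zcombo_scale, zcombo_bind.
  replace (delta j j3 -
           (zcombo (fun t => row t j3) l + q * zcombo (fun k => zcombo (fun t => row t j3) (sp k)) r))
    with (q * zcombo (fun k => delta k j3 - zcombo (fun t => row t j3) (sp k)) r).
  - change (Nat.pow p (S a)) with (p * Nat.pow p a)%nat. rewrite Nat2Z.inj_mul, Z.mul_comm.
    apply Z.mul_divide_mono_l, zcombo_divide. intros k. apply Hsp.
  - assert (E : delta j j3 - zcombo (fun t => row t j3) l = q * coef r j3).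
    { now rewrite <- Herr, !coef_delta, Hrz. }
    rewrite zcomboB, <- coef_delta. nia.
Qed.
End MaximalExtension.

Section BoundedExponent.
Variable A : AbGroup.
Variable v : nat.
Hypothesis Hexp : forall a : A, natmul (Nat.pow p v) a = azero.
Variable c : I -> A.

(* With K maximal, each e_j is congruent modulo p^v to a combination of equations and of e_k,
   k in K; evaluating it with equation i replaced by c i and each e_k by 0 gives z j. *)
Theorem solvable_bounded : exists z : J -> A, forall i, lin (w i) z = c i.
Proof.
  destruct (zorn extends_rows extends_rows_chain) as [K [HK Hmax]].
  set (q := Z.of_nat (Nat.pow p v)).
  destruct (choice _ (unit_row_mod_pow K HK Hmax v)) as [lj Hlj].
  set (cval := fun t : I + J => match t with inl i => c i | inr _ => azero end).
  exists (fun j => eval_combo cval (lj j)). intros i. apply subr0_eq.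
  set (m := combo_bind lj (word_combo (w i)) ++ [(inl i, -1)]).
  transitivity (eval_combo cval m).
  { unfold m. rewrite eval_combo_app, eval_combo_bind, eval_combo_cons, zmulN1. cbn [cval].
    now rewrite (addr0 A). }
  apply (eval_combo_exponent A cval m q).
  - apply (independent_mod_pow p row (allowed K) (prime_pos p Hp) HK v m).
    + apply combo_on_app; [apply combo_on_bind; intros j; apply Hlj | apply combo_on_single; constructor].
    + intros j3. unfold m. rewrite zcombo_app, zcombo_cons, zcombo_bind. change (zcombo _ []) with 0.
      unfold row at 2. cbn [row_combo]. rewrite coef_delta, Z.add_0_r.
      replace (_ + _)
        with (- zcombo (fun j => delta j j3 - zcombo (fun t => row t j3) (lj j)) (word_combo (w i)))
        by (rewrite zcomboB; ring).
      apply Z.divide_opp_r, zcombo_divide. intros j. apply Hlj.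
  - intros a. unfold q. now rewrite zmul_nat.
Qed.
End BoundedExponent.
End LinearSystems.

Lemma upper_central_factor (G : Group) (N : G -> Prop) k : normal N ->
  central_factor (upper_central N k) (upper_central N (S k)).
Proof.
  intros HN. destruct (upper_central_normal G N HN (S k)) as [H1 [HM [HV _]]].
  split; [now apply upper_central_normal|]. repeat split; auto using upper_centralS, upper_central_central.
Qed.

Lemma down_induction (P : nat -> Prop) n : P n -> (forall k, P (S k) -> P k) -> P 0.
Proof. intros Hn Hstep. induction n; auto. Qed.

(* Descending along the upper central series of G/N, each factor is central of exponent p^v. *)
Lemma solvable_mod_nilpotent_bounded (G : Group) (I J : Type) (w : I -> word G J) p (N : G -> Prop) c v :
  prime (Z.of_nat p) -> p_nonsingular p w -> normal N ->
  (forall x : G, upper_central N c x) -> (forall x : G, N (gpow x (Nat.pow p v))) ->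
  exists a : J -> G, forall i, N (eval_word a (w i)).
Proof.
  intros Hp Hns HN Hc Hexp.
  apply (down_induction (fun k => exists a : J -> G, forall i, upper_central N k (eval_word a (w i))) c).
  - exists (fun _ => gone). intros i. apply Hc.
  - intros k [a Ha]. apply (lift_solution G _ _ (upper_central_factor G N k HN) w a Ha).
    intros cc. apply (solvable_bounded G I J w p Hp Hns _ v), quotient_exponent.
    intros x _. now apply upper_central_of_normal.
Qed.

Lemma infinite_height_central_factor p (G : Group) c m :
  prime (Z.of_nat p) -> p_group p G -> (forall x : G, upper_central trivial_subgroup c x) ->
  1 <= m -> (forall x : G, of_infinite_height p G (gpow x m)) ->
  central_factor trivial_subgroup (of_infinite_height p G).
Proof.
  intros Hp Hpg Hc Hm1 Hm.
  destruct (normal_of_infinite_height p G Hp Hpg c Hc m Hm1 Hm) as [H1 [HM [HV _]]].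
  split; [apply normal_trivial|]. repeat split; auto.
  - intros x ->. exact H1.
  - intros z Hz g. unfold congr_mod, trivial_subgroup.
    rewrite (of_infinite_height_central p G Hpg c Hc z Hz g). apply gmulV.
Qed.

Theorem lemma4 (p : nat) (G : Group) :
  prime (Z.of_nat p) ->
  nilpotent G -> p_group p G -> first_Ulm_factor_bounded p G ->
  forall (I J : Type) (w : I -> word G J),
    p_nonsingular p w -> has_solution w.
Proof.
  intros Hp Hnil Hpg [m [Hm1 Hm]] I J w Hns.
  destruct (nilpotent_upper_central G Hnil) as [c Hc].
  assert (Hinf : forall x : G, of_infinite_height p G (gpow x m)) by (intros x; apply infinite_heightE, Hm).
  pose proof (infinite_height_central_factor p G c m Hp Hpg Hc Hm1 Hinf) as HG0.
  destruct (exponent_mod_infinite_height p G Hp Hpg m Hm1 Hinf) as [v Hv].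
  assert (Hc0 : forall x, upper_central (of_infinite_height p G) c x).
  { intros x. apply (upper_central_mono G trivial_subgroup); [|apply Hc].
    intros y ->. exact (proj1 (proj2 HG0)). }
  destruct (solvable_mod_nilpotent_bounded G I J w p (of_infinite_height p G) c v Hp Hns
              (normal_of_infinite_height p G Hp Hpg c Hc m Hm1 Hinf) Hc0 Hv) as [a Ha].
  apply (lift_solution G _ _ HG0 w a Ha).
  intros cc. apply (solvable_divisible G I J w p Hp Hns), quotient_divisible.
  intros x d Hx Hd. now apply (of_infinite_height_divisible p G Hp Hpg m Hm1 Hinf).
Qed.
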